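(* If $\mathbb{k}$ contains a primitive $2k$-th root of unity, then $\mathrm{Cl}_q(n,k)$ is semisimple; in fact $\mathrm{Cl}_q(n,k)$ is isomorphic as a $\mathbb{k}$-algebra to a direct sum of $(2k)^n$ copies of the matrix algebra $\mathrm{Mat}_{2^n}(\mathbb{k})$.
   Context: Let $\mathbb{k}$ be a field of characteristic different from $2$, let $q\in\mathbb{k}^\times$, and let $n,k$ be positive integers. The quantum Clifford algebra $\mathrm{Cl}_q(n,k)$ is the unital associative $\mathbb{k}$-algebra generated by $\psi_a,\psi_a^*,\omega_a,\omega_a^{-1}$ for $a\in\{1,\dots,n\}$, subject to the relations (for all $a,b\in\{1,\dots,n\}$): $\omega_a\omega_b=\omega_b\omega_a$; $\omega_a\omega_a^{-1}=1$; $\omega_a\psi_b=q^{\delta_{ab}}\psi_b\omega_a$; $\omega_a\psi_b^*=q^{-\delta_{ab}}\psi_b^*\omega_a$; $\psi_a\psi_b+\psi_b\psi_a=0$; $\psi_a^*\psi_b^*+\psi_b^*\psi_a^*=0$; $\psi_a\psi_a^*+q^k\psi_a^*\psi_a=\omega_a^{-k}$; $\psi_a\psi_a^*+q^{-k}\psi_a^*\psi_a=\omega_a^{k}$; and $\psi_a\psi_b^*+\psi_b^*\psi_a=0$ if $a\neq b$. *)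

From HB Require Import structures.
From mathcomp Require Import all_boot all_order all_algebra.
Set Implicit Arguments. Unset Strict Implicit. Unset Printing Implicit Defensive.
Import Order.TTheory GRing.Theory Num.Theory.
Local Open Scope ring_scope.

(* Defining relations of the quantum Clifford algebra Cl_q(n,k), for a
   family of elements psi, psis (= psi-star), om (= omega), omi (= omega^{-1})
   of an F-algebra B, indexed by 'I_n. *)
Definition clq_rels (F : fieldType) (q : F) (n k : nat) (B : algType F)
    (psi psis om omi : 'I_n -> B) : Prop :=
  (forall a b, om a * om b = om b * om a)
  /\       (forall a, om a * omi a = 1 /\ omi a * om a = 1)
  /\       (forall a b, om a * psi b = (if a == b then q else 1) *: (psi b * om a))
  /\       (forall a b, om a * psis b = (if a == b then q^-1 else 1) *: (psis b * om a))
  /\       (forall a b, psi a * psi b + psi b * psi a = 0)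
  /\       (forall a b, psis a * psis b + psis b * psis a = 0)
  /\       (forall a, psi a * psis a + q ^+ k *: (psis a * psi a) = omi a ^+ k)
  /\       (forall a, psi a * psis a + (q ^+ k)^-1 *: (psis a * psi a) = om a ^+ k)
  /\       (forall a b, a != b -> psi a * psis b + psis b * psi a = 0).

Definition is_alg_hom (F : fieldType) (A B : algType F) (f : A -> B) : Prop :=
  [/\ (forall x y, f (x + y) = f x + f y),
      (forall (c : F) x, f (c *: x) = c *: f x),
      (forall x y, f (x * y) = f x * f y) & f 1 = 1].

(* (A, psi, psis, om, omi) is a presentation of Cl_q(n,k): the generators
   satisfy the relations and A has the universal property of the algebra
   defined by these generators and relations. *)
Definition is_Clq (F : fieldType) (q : F) (n k : nat) (A : algType F)
    (psi psis om omi : 'I_n -> A) : Prop :=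
  clq_rels q k psi psis om omi /\
  forall (B : algType F) (psi' psis' om' omi' : 'I_n -> B),
    clq_rels q k psi' psis' om' omi' ->
    (exists g : A -> B, is_alg_hom g /\
        forall a, [/\ g (psi a) = psi' a, g (psis a) = psis' a,
                      g (om a) = om' a & g (omi a) = omi' a]) /\
    (forall g1 g2 : A -> B, is_alg_hom g1 -> is_alg_hom g2 ->
       (forall a, [/\ g1 (psi a) = g2 (psi a), g1 (psis a) = g2 (psis a),
                      g1 (om a) = g2 (om a) & g1 (omi a) = g2 (omi a)]) ->
       forall x, g1 x = g2 x).

Definition is_left_ideal (R : nzRingType) (I : R -> Prop) : Prop :=
  [/\ I 0, (forall x y, I x -> I y -> I (x - y)) & (forall r x, I x -> I (r * x))].

Definition semisimple_ring (R : nzRingType) : Prop :=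
  forall I : R -> Prop, is_left_ideal I ->
    exists J : R -> Prop, [/\ is_left_ideal J,
      (forall x, I x -> J x -> x = 0) &
      (forall x, exists y z, [/\ I y, J z & x = y + z])].

(* A is isomorphic as an F-algebra to the direct sum (product) of m copies
   of Mat_d(F): there are algebra homomorphisms f_i : A -> Mat_d(F) (i < m)
   whose combination A -> Mat_d(F)^m is bijective. *)
Definition iso_to_sum_of_matrix_algebras (F : fieldType) (A : algType F)
    (m d : nat) : Prop :=
  exists f : 'I_m -> A -> 'M[F]_d,
    (forall i x y, f i (x + y) = f i x + f i y)
     /\         (forall i (c : F) x, f i (c *: x) = c *: f i x)
     /\         (forall i x y, f i (x * y) = f i x *m f i y)
     /\         (forall i, f i 1 = 1%:M)
     /\         (forall x y, (forall i, f i x = f i y) -> x = y)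
     /\         (forall M : 'I_m -> 'M[F]_d, exists x, forall i, f i x = M i).

From HB Require Import structures.
From mathcomp Require Import all_boot all_order all_algebra.
From mathcomp Require Import ring.
From Stdlib Require Import ClassicalEpsilon.
Set Implicit Arguments. Unset Strict Implicit. Unset Printing Implicit Defensive.
Import Order.TTheory GRing.Theory Num.Theory.
Local Open Scope ring_scope.

(* Fix a primitive 2k-th root of unity z.  For each exponent vector c : 'I_n -> 'I_(2k),
   Jordan-Wigner matrices on F^(2^n), with om a acting diagonally by w a or w a / q where
   w a := z ^+ c a, satisfy the defining relations; this gives algebra maps
   f_c : A -> Mat_(2^n)(F).  In A, the elements (psi psis)^2 and (psis psi)^2 of a mode
   are complementary idempotents and (psi psis)^2 om + q (psis psi)^2 om is sent by f_c
   to the scalar z ^+ c a; Lagrange interpolation in these elements separates the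
   (2k)^n blocks, and products of the idempotents and of the psi + psis give every
   matrix unit inside a block, so (f_c)_c is onto.  Conversely the universal property
   shows that A is spanned by the (8k)^n products over the modes of E om^j, E one of
   psi, psis, (psi psis)^2, (psis psi)^2 and j < 2k; as (8k)^n is the dimension of the
   target, (f_c)_c is injective too.  Semisimplicity is inherited from Mat_(2^n)(F). *)

Definition classicb (P : Prop) : bool := if excluded_middle_informative P then true else false.

Lemma classicbP (P : Prop) : reflect P (classicb P).
Proof. by rewrite /classicb; case: excluded_middle_informative => ?; constructor. Qed.

Section AlgHom.
Variables (F : fieldType) (A B : algType F) (f : A -> B).
Hypothesis f_hom : is_alg_hom f.

Lemma alg_homD x y : f (x + y) = f x + f y. Proof. by case: f_hom. Qed.
Lemma alg_homZ c x : f (c *: x) = c *: f x. Proof. by case: f_hom. Qed.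
Lemma alg_homM x y : f (x * y) = f x * f y. Proof. by case: f_hom. Qed.
Lemma alg_hom1 : f 1 = 1. Proof. by case: f_hom. Qed.
Lemma alg_hom0 : f 0 = 0. Proof. by rewrite -(scale0r 0) alg_homZ scale0r. Qed.
Lemma alg_homB x y : f (x - y) = f x - f y.
Proof. by rewrite -scaleN1r alg_homD alg_homZ scaleN1r. Qed.

Lemma alg_hom_sum (I : Type) (r : seq I) (P : pred I) (G : I -> A) :
  f (\sum_(i <- r | P i) G i) = \sum_(i <- r | P i) f (G i).
Proof. exact: (big_morph f alg_homD alg_hom0). Qed.

Lemma alg_hom_prod (I : Type) (r : seq I) (P : pred I) (G : I -> A) :
  f (\prod_(i <- r | P i) G i) = \prod_(i <- r | P i) f (G i).
Proof. exact: (big_morph f alg_homM alg_hom1). Qed.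

End AlgHom.

Section LeftIdeals.
Variable R : nzRingType.
Implicit Type I : R -> Prop.

Definition has_right_unit I := exists2 e, I e & forall x, I x -> x * e = x.

Lemma left_idealD I x y : is_left_ideal I -> I x -> I y -> I (x + y).
Proof.
case=> I0 IB _ Ix Iy.
by have := IB x (0 - y) Ix (IB 0 y I0 Iy); rewrite sub0r opprK.
Qed.

Lemma left_ideal_sum I (J : Type) (r : seq J) (P : pred J) (G : J -> R) :
  is_left_ideal I -> (forall j, P j -> I (G j)) -> I (\sum_(j <- r | P j) G j).
Proof.
move=> I_ideal IG; apply: (big_ind I) => //; first by case: I_ideal.
by move=> x y; apply: left_idealD.
Qed.

(* [I] is complemented by the left annihilator of its right unit. *)
Lemma semisimple_of_right_units :
  (forall I, is_left_ideal I -> has_right_unit I) -> semisimple_ring R.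
Proof.
move=> units I I_ideal; have [e Ie eK] := units I I_ideal.
have [_ _ IM] := I_ideal.
have ee : e * e = e by apply: eK.
exists (fun x => x * e = 0); split.
- split; first by rewrite mul0r.
  + by move=> x y xe0 ye0; rewrite mulrBl xe0 ye0 subr0.
  + by move=> r x xe0; rewrite -mulrA xe0 mulr0.
- by move=> x Ix xe0; rewrite -(eK x Ix) xe0.
- move=> x; exists (x * e), (x - x * e); split; first exact: IM.
  + by rewrite mulrBl -mulrA ee subrr.
  + by rewrite addrC subrK.
Qed.

End LeftIdeals.

Section MatrixLeftIdeals.
Variables (F : fieldType) (d : nat).
Variable I : 'M[F]_d.+1 -> Prop.
Hypothesis I_ideal : is_left_ideal I.

(* An element of maximal rank contains the row space of every element. *)
Lemma mx_left_ideal_generator : exists2 M0, I M0 & forall M, I M -> (M <= M0)%MS.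
Proof.
have [I0 _ IM] := I_ideal.
pose has_rank (r : nat) := classicb (exists2 M, I M & \rank M = r).
have rank0 : has_rank 0%N by apply/classicbP; exists 0; rewrite ?mxrank0.
have rank_bounded r : has_rank r -> (r <= d.+1)%N.
  by move=> /classicbP [M _ <-]; apply: rank_leq_row.
case: (ex_maxnP (ex_intro has_rank 0%N rank0) rank_bounded) => r /classicbP [M0 IM0 rkM0] rmax.
exists M0 => // M IM'.
have /sub_addsmxP [u defS] : ((M0 + M)%MS <= M0 + M)%MS by apply: submx_refl.
have IS : I (M0 + M)%MS.
  by rewrite defS; apply: left_idealD I_ideal (IM _ _ IM0) (IM _ _ IM').
have rkS : (\rank (M0 + M)%MS <= r)%N by apply: rmax; apply/classicbP; exists (M0 + M)%MS.
have sM0S : (M0 <= M0 + M)%MS by apply: addsmxSl.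
have sSM0 : ((M0 + M)%MS <= M0)%MS.
  by have [_ <-] := mxrank_leqif_sup sM0S; rewrite eqn_leq mxrankS // rkM0 rkS.
exact: submx_trans (addsmxSr M0 M) sSM0.
Qed.

Lemma mx_left_ideal_right_unit : has_right_unit I.
Proof.
have [_ _ IM] := I_ideal; have [M0 IM0 sub_M0] := mx_left_ideal_generator.
exists (proj_mx M0 M0^C%MS).
  have : (1%:M *m proj_mx M0 M0^C <= M0)%MS by apply: proj_mx_sub.
  by rewrite mul1mx => /submxP [X ->]; apply: IM.
by move=> M IM'; apply: proj_mx_id; [apply: capmx_compl|apply: sub_M0].
Qed.

End MatrixLeftIdeals.

Section ProductOfMatrixAlgebras.
Variables (F : fieldType) (A : algType F) (C : finType) (d : nat).
Variable f : C -> A -> 'M[F]_d.+1.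
Hypotheses (f_hom : forall c, is_alg_hom (f c))
  (f_inj : forall x y, (forall c, f c x = f c y) -> x = y)
  (f_surj : forall M : C -> 'M[F]_d.+1, exists x, forall c, f c x = M c).

Lemma image_left_ideal (I : A -> Prop) c : is_left_ideal I ->
  is_left_ideal (fun M => exists2 x, I x & f c x = M).
Proof.
case=> I0 IB IM; split.
- by exists 0 => //; rewrite (alg_hom0 (f_hom c)).
- move=> _ _ [x Ix <-] [y Iy <-]; exists (x - y); first exact: IB.
  by rewrite (alg_homB (f_hom c)).
- move=> M _ [x Ix <-]; have [y fy] := f_surj (fun=> M).
  by exists (y * x); [apply: IM|rewrite (alg_homM (f_hom c)) fy].
Qed.

(* A right unit of [I] is assembled blockwise from right units of the images of [I]. *)
Lemma semisimple_of_mx_product : semisimple_ring A.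
Proof.
apply: semisimple_of_right_units => I I_ideal; have [_ _ IM] := I_ideal.
have units c : exists2 x, I x & forall y, I y -> f c y * f c x = f c y.
  have [_ [x Ix <-] eK] := mx_left_ideal_right_unit (image_left_ideal c I_ideal).
  by exists x => // y Iy; apply: eK; exists y.
have [u Iu uK] := fin_all_exists2 units.
have [idem idemE] := fin_all_exists (fun c => f_surj (fun c' => (c' == c)%:R)).
exists (\sum_c idem c * u c).
  by apply: left_ideal_sum => // c _; apply: IM.
move=> x Ix; apply: f_inj => c; have [_ _ fM _] := f_hom c.
rewrite fM (alg_hom_sum (f_hom c)) (bigD1 c) //= big1.
  by rewrite addr0 fM idemE eqxx mul1r uK.
by move=> c' neq_c'; rewrite fM idemE eq_sym (negbTE neq_c') mul0r.
Qed.

End ProductOfMatrixAlgebras.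

Section SkewCommutation.
Variables (F : fieldType) (A : algType F).
Implicit Types (g x y : A) (s t : F).

Definition skew_comm g x s := g * x = s *: (x * g).

Lemma skew_comm1 g : skew_comm g 1 1.
Proof. by rewrite /skew_comm scale1r mulr1 mul1r. Qed.

Lemma skew_commM g x y s t :
  skew_comm g x s -> skew_comm g y t -> skew_comm g (x * y) (s * t).
Proof.
rewrite /skew_comm => gx gy; rewrite mulrA gx -scalerAl -(mulrA x g y) gy.
by rewrite scalerAr scalerA -scalerAr mulrA.
Qed.

Lemma skew_commX g x s j : skew_comm g x s -> skew_comm g (x ^+ j) (s ^+ j).
Proof.
move=> gx; elim: j => [|j IH]; first by rewrite !expr0; apply: skew_comm1.
by rewrite !exprS; apply: skew_commM.
Qed.

Lemma skew_commV g g' x s : g * g' = 1 -> g' * g = 1 -> s != 0 ->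
  skew_comm g x s -> skew_comm g' x s^-1.
Proof.
rewrite /skew_comm => gg' g'g s_neq0 gx.
have xg : x * g = s^-1 *: (g * x) by rewrite gx scalerA mulVf ?scale1r.
rewrite -[g' * x]mulr1 -gg' mulrA -(mulrA g') xg -scalerAr -scalerAl.
by rewrite mulrA g'g mul1r.
Qed.

Lemma skew_comm_anti g x : g * x + x * g = 0 -> skew_comm g x (-1).
Proof. by rewrite /skew_comm scaleN1r => /eqP; rewrite addr_eq0 => /eqP. Qed.

Lemma skew_comm_prod (I : eqType) (r : seq I) (b : I) g (G : I -> A) :
    uniq r -> b \in r -> {in r, forall a, a != b -> exists s, skew_comm g (G a) s} ->
  exists s, g * \prod_(a <- r) G a = s *: \prod_(a <- r) (if a == b then g * G a else G a).
Proof.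
elim: r => //= a r IH /andP [a_notin_r r_uniq] b_in skewG.
have [<- | neq_ab] := eqVneq a b.
  exists 1; rewrite !big_cons eqxx scale1r mulrA; congr (_ * _).
  apply: eq_big_seq => a' a'_in; case: eqVneq a'_in => // ->.
  by rewrite (negbTE a_notin_r).
rewrite in_cons eq_sym (negbTE neq_ab) /= in b_in.
have [s gG] := skewG a (mem_head a r) neq_ab.
have [s' IHs] : exists s', g * \prod_(a' <- r) G a' =
    s' *: \prod_(a' <- r) (if a' == b then g * G a' else G a').
  by apply: IH => // a' a'_in; apply: skewG; rewrite in_cons a'_in orbT.
exists (s * s'); rewrite !big_cons (negbTE neq_ab) mulrA gG -scalerAl -mulrA IHs.
by rewrite -scalerAr scalerA.
Qed.

End SkewCommutation.

Section Span.
Variables (F : fieldType) (A : lmodType F) (K : finType) (T : K -> A).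

Definition in_span x := exists cf : K -> F, x = \sum_i cf i *: T i.

Lemma in_span0 : in_span 0.
Proof. by exists (fun=> 0); rewrite big1 // => i _; rewrite scale0r. Qed.

Lemma in_spanD x y : in_span x -> in_span y -> in_span (x + y).
Proof.
move=> [cf ->] [cf' ->]; exists (fun i => cf i + cf' i).
by rewrite -big_split; apply: eq_bigr => i _; rewrite scalerDl.
Qed.

Lemma in_spanZ c x : in_span x -> in_span (c *: x).
Proof.
move=> [cf ->]; exists (fun i => c * cf i).
by rewrite scaler_sumr; apply: eq_bigr => i _; rewrite scalerA.
Qed.

Lemma in_span_sum (J : Type) (r : seq J) (P : pred J) (G : J -> A) :
  (forall j, P j -> in_span (G j)) -> in_span (\sum_(j <- r | P j) G j).
Proof. by move=> spanG; apply: big_ind => //; [apply: in_span0|apply: in_spanD]. Qed.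

Lemma in_span_gen i : in_span (T i).
Proof.
exists (fun j => (j == i)%:R); rewrite (bigD1 i) //= eqxx scale1r big1 ?addr0 //.
by move=> j /negbTE ->; rewrite scale0r.
Qed.

End Span.

Lemma prod_in_span (F : fieldType) (A : algType F) (n : nat) (K : finType)
    (T : 'I_n -> K -> A) (G : 'I_n -> A) :
    (forall a, in_span (T a) (G a)) ->
  in_span (fun t : {ffun 'I_n -> K} => \prod_(a < n) T a (t a)) (\prod_(a < n) G a).
Proof.
move=> /fin_all_exists [cf defG]; exists (fun t : {ffun 'I_n -> K} => \prod_(a < n) cf a (t a)).
rewrite (eq_bigr _ (fun a _ => defG a)) bigA_distr_bigA /=.
apply: eq_bigr => t _; apply: (big_rec3 (fun x y z => x = y *: z)) => [|a x y z _ ->].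
  by rewrite scale1r.
by rewrite -scalerAl -scalerAr scalerA.
Qed.

Section JointMatrixMaps.
Variables (F : fieldType) (A : algType F) (C : finType) (d : nat).
Variable f : C -> A -> 'M[F]_d.+1.
Hypothesis f_hom : forall c, is_alg_hom (f c).

Lemma joint_surj_of_units :
    (forall c0 i j, exists x, forall c, f c x = (c == c0)%:R *: delta_mx i j) ->
  forall M : C -> 'M[F]_d.+1, exists x, forall c, f c x = M c.
Proof.
move=> units M; have [u uE] := fin_all_exists (fun cij : C * 'I_d.+1 * 'I_d.+1 =>
  units cij.1.1 cij.1.2 cij.2).
exists (\sum_c0 \sum_i \sum_j M c0 i j *: u (c0, i, j)) => c.
rewrite (alg_hom_sum (f_hom c)) (bigD1 c) //= [X in _ + X]big1 => [|c0 neq_c0].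
  rewrite addr0 (alg_hom_sum (f_hom c)) [RHS]matrix_sum_delta; apply: eq_bigr => i _.
  rewrite (alg_hom_sum (f_hom c)); apply: eq_bigr => j _.
  by rewrite (alg_homZ (f_hom c)) uE eqxx scale1r.
rewrite (alg_hom_sum (f_hom c)) big1 // => i _; rewrite (alg_hom_sum (f_hom c)) big1 // => j _.
by rewrite (alg_homZ (f_hom c)) uE eq_sym (negbTE neq_c0) scale0r scaler0.
Qed.

(* The images of the spanning family span the target, of dimension [#|K|], so they are free. *)
Lemma joint_inj_of_span (K : finType) (T : K -> A) :
    (forall x, in_span T x) -> #|K| = (#|C| * (d.+1 * d.+1))%N ->
    (forall M : C -> 'M[F]_d.+1, exists x, forall c, f c x = M c) ->
  forall x y, (forall c, f c x = f c y) -> x = y.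
Proof.
move=> T_span cardK f_surj x y fxy.
pose fv x : {ffun C -> 'M[F]_d.+1} := [ffun c => f c x].
have fv_comb (cf : K -> F) : fv (\sum_t cf t *: T t) = \sum_t cf t *: fv (T t).
  apply/ffunP => c; rewrite sum_ffunE ffunE (alg_hom_sum (f_hom c)).
  by apply: eq_bigr => t _; rewrite !ffunE (alg_homZ (f_hom c)).
pose X := [tuple fv (T (enum_val i)) | i < #|K|].
have X_full : (<<X>> = fullv)%VS.
  apply/eqP; rewrite eqEsubv subvf; apply/subvP => v _.
  have [x' fx'] := f_surj (fun c => v c); have [cf defx'] := T_span x'.
  have -> : v = fv (\sum_t cf t *: T t) by apply/ffunP => c; rewrite ffunE -defx' fx'.
  rewrite fv_comb; apply: memv_suml => t _; apply/memvZ/memv_span.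
  apply/(nthP 0); exists (enum_rank t); first by rewrite size_tuple.
  by rewrite (nth_mktuple _ 0 (enum_rank t)) enum_rankK.
have /freeP X_free : free X by rewrite /free X_full dimvf size_tuple cardK.
have [cf defxy] := T_span (x - y).
suff cf0 t : cf t = 0.
  by apply/eqP; rewrite -subr_eq0 defxy big1 // => t _; rewrite cf0 scale0r.
rewrite -(enum_rankK t); apply: (X_free (fun i => cf (enum_val i))).
rewrite (eq_bigr (fun i => cf (enum_val i) *: fv (T (enum_val i)))); last first.
  by move=> i _; rewrite (nth_mktuple _ 0 i).
rewrite -(big_enum_val (A := {: K}) (fun t => cf t *: fv (T t))) /=.
rewrite (eq_bigl xpredT) -?fv_comb -?defxy; last by move=> t'; rewrite inE.
by apply/ffunP => c; rewrite !ffunE (alg_homB (f_hom c)) fxy subrr.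
Qed.

Lemma iso_of_joint_bij m : #|C| = m ->
    (forall x y, (forall c, f c x = f c y) -> x = y) ->
    (forall M : C -> 'M[F]_d.+1, exists x, forall c, f c x = M c) ->
  iso_to_sum_of_matrix_algebras A m d.+1.
Proof.
move=> cardC f_inj f_surj; pose g (i : 'I_m) := f (enum_val (cast_ord (esym cardC) i)).
have gK c : g (cast_ord cardC (enum_rank c)) = f c by rewrite /g cast_ordK enum_rankK.
exists g; split; [|split; [|split; [|split; [|split]]]].
- by move=> i; apply: (alg_homD (f_hom _)).
- by move=> i; apply: (alg_homZ (f_hom _)).
- by move=> i; apply: (alg_homM (f_hom _)).
- by move=> i; apply: (alg_hom1 (f_hom _)).
- by move=> x y gxy; apply: f_inj => c; rewrite -!gK gxy.
move=> M; have [x fx] := f_surj (fun c => M (cast_ord cardC (enum_rank c))).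
by exists x => i; rewrite /g fx enum_valK cast_ordKV.
Qed.

End JointMatrixMaps.

Lemma prod_eq_ffun (R : comNzRingType) (T : finType) (U : eqType) (f g : {ffun T -> U}) :
  \prod_i ((f i == g i)%:R : R) = (f == g)%:R.
Proof.
have [-> | neq_fg] := eqVneq f g; first by rewrite big1 // => i _; rewrite eqxx.
have /existsP [i neq_i] : [exists i, f i != g i].
  by apply: contraR neq_fg => /existsPn eq_fg; apply/eqP/ffunP => i; apply/eqP/negPn/eq_fg.
by rewrite (bigD1 i) //= (negbTE neq_i) mul0r.
Qed.

Section MonomialMatrices.
Variables (F : fieldType) (G : finZmodType).

Lemma card_finZmod_gt0 : (0 < #|G|)%N.
Proof. by apply/card_gt0P; exists 0. Qed.

Local Notation D := #|G|.-1.+1.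
Let cardG : D = #|G|. Proof. exact: prednK card_finZmod_gt0. Qed.

Definition elt_of_ord (i : 'I_D) : G := enum_val (cast_ord cardG i).
Definition ord_of_elt (x : G) : 'I_D := cast_ord (esym cardG) (enum_rank x).

Lemma elt_of_ordK : cancel elt_of_ord ord_of_elt.
Proof. by move=> i; rewrite /ord_of_elt enum_valK cast_ordK. Qed.
Lemma ord_of_eltK : cancel ord_of_elt elt_of_ord.
Proof. by move=> x; rewrite /elt_of_ord cast_ordKV enum_rankK. Qed.
Lemma elt_of_ord_inj : injective elt_of_ord. Proof. exact: can_inj elt_of_ordK. Qed.
Lemma eq_elt_of_ord i x : (elt_of_ord i == x) = (i == ord_of_elt x).
Proof. by apply/eqP/eqP => [<-|->]; rewrite ?elt_of_ordK ?ord_of_eltK. Qed.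

(* The matrix of [e_t |-> g t *: e_(m + t)], the basis being indexed by [elt_of_ord]. *)
Definition monomx (m : G) (g : G -> F) : 'M[F]_D :=
  \matrix_(i, j) if elt_of_ord i == m + elt_of_ord j then g (elt_of_ord j) else 0.

Lemma monomxM m1 g1 m2 g2 :
  monomx m1 g1 * monomx m2 g2 = monomx (m1 + m2) (fun t => g1 (m2 + t) * g2 t).
Proof.
apply/matrixP => i j; rewrite !mxE (bigD1 (ord_of_elt (m2 + elt_of_ord j))) //=.
rewrite !mxE ord_of_eltK eqxx addrA big1 ?addr0 => [|r /negbTE r_neq].
  by case: eqP; rewrite ?mul0r.
by rewrite !mxE [elt_of_ord r == _]eq_elt_of_ord r_neq mulr0.
Qed.

Lemma eq_monomx m g1 g2 : g1 =1 g2 -> monomx m g1 = monomx m g2.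
Proof. by move=> eq_g; apply/matrixP => i j; rewrite !mxE eq_g. Qed.

Lemma monomxD m g1 g2 : monomx m g1 + monomx m g2 = monomx m (fun t => g1 t + g2 t).
Proof. by apply/matrixP => i j; rewrite !mxE; case: eqP; rewrite ?addr0. Qed.

Lemma monomxZ m g c : c *: monomx m g = monomx m (fun t => c * g t).
Proof. by apply/matrixP => i j; rewrite !mxE; case: eqP; rewrite ?mulr0. Qed.

Lemma monomx0 m g : g =1 (fun=> 0) -> monomx m g = 0.
Proof. by move=> g0; apply/matrixP => i j; rewrite !mxE g0; case: eqP. Qed.

Lemma monomx_scalar c : monomx 0 (fun=> c) = c%:M.
Proof.
apply/matrixP => i j; rewrite !mxE add0r (inj_eq elt_of_ord_inj).
by case: eqP; rewrite ?mulr1n ?mulr0n.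
Qed.

Lemma monomx1 : monomx 0 (fun=> 1) = 1.
Proof. exact: monomx_scalar. Qed.

Lemma prod_diag_monomx (I : Type) (r : seq I) (gs : I -> G -> F) :
  \prod_(a <- r) monomx 0 (gs a) = monomx 0 (fun t => \prod_(a <- r) gs a t).
Proof.
elim: r => [|a r IH]; first by rewrite big_nil -monomx1; apply: eq_monomx => t; rewrite big_nil.
by rewrite big_cons IH monomxM add0r; apply: eq_monomx => t; rewrite add0r big_cons.
Qed.

Lemma diag_monomxX g j : monomx 0 g ^+ j = monomx 0 (fun t => g t ^+ j).
Proof.
elim: j => [|j IH]; first by rewrite expr0 -monomx1; apply: eq_monomx.
by rewrite exprS IH monomxM add0r; apply: eq_monomx => t; rewrite add0r exprS.
Qed.

Lemma prod_monomx (I : Type) (r : seq I) (ms : I -> G) (gs : I -> G -> F) :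
    (forall a t, gs a t != 0) ->
  exists2 g : G -> F, (forall t, g t != 0) &
    \prod_(a <- r) monomx (ms a) (gs a) = monomx (\sum_(a <- r) ms a) g.
Proof.
move=> gs_neq0; elim: r => [|a r [g g_neq0 IH]].
  by exists (fun=> 1) => [t|]; rewrite ?oner_neq0 // !big_nil monomx1.
exists (fun t => gs a (\sum_(b <- r) ms b + t) * g t) => [t|].
  by rewrite mulf_neq0.
by rewrite !big_cons IH monomxM.
Qed.

Lemma monomx_corner s u g :
  monomx 0 (fun x => (x == s)%:R) * monomx (s - u) g * monomx 0 (fun x => (x == u)%:R)
  = g u *: delta_mx (ord_of_elt s) (ord_of_elt u).
Proof.
rewrite !monomxM !add0r addr0; apply/matrixP => i j; rewrite !mxE !eq_elt_of_ord.
have [-> | j_neq] := eqVneq j (ord_of_elt u); last by rewrite andbF !mulr0; case: ifP.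
rewrite ord_of_eltK add0r subrK eqxx andbT !mulr1.
by case: (i == _); rewrite ?mul1r ?mulr1 ?mulr0.
Qed.

End MonomialMatrices.

(* Declaring both structures on the alias makes [bits n] a [finZmodType] (xor group). *)
Definition bits n := {ffun 'I_n -> bool}.
HB.instance Definition _ n := Finite.on (bits n).
HB.instance Definition _ n := GRing.Zmodule.on (bits n).

Section Bits.
Variable n : nat.
Implicit Types (s t : bits n) (a b : 'I_n).

Definition ebit a : bits n := [ffun b => b == a].

Lemma ebitE a b : ebit a b = (b == a). Proof. by rewrite ffunE. Qed.
Lemma bitsDE s t a : (s + t) a = s a (+) t a. Proof. by rewrite ffunE. Qed.
Lemma bitsBE s t a : (s - t) a = s a (+) t a. Proof. by rewrite !ffunE. Qed.
Lemma bits_addNN s : s + s = 0.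
Proof. by apply/ffunP => a; rewrite !ffunE; case: (s a). Qed.

Lemma sum_ebit_diff s t : \sum_a (if s a != t a then ebit a else 0) = s - t.
Proof.
apply/ffunP => b; rewrite sum_ffunE bitsBE (bigD1 b) //= big1 => [|a neq_ab]; last first.
  by rewrite eq_sym in neq_ab; case: ifP; rewrite !ffunE // (negbTE neq_ab).
by case: ifP; rewrite !ffunE ?eqxx addr0; case: (s b); case: (t b).
Qed.

Lemma card_bits : #|bits n| = (2 ^ n)%N.
Proof. by rewrite card_ffun card_bool card_ord. Qed.

End Bits.

Section JordanWigner.
Variables (F : fieldType) (n : nat).
Implicit Types (t : bits n) (a b : 'I_n).

(* The sign that makes the operators [jw_mx] of distinct modes anticommute. *)
Definition jw_sign a t : F := \prod_(b < n | (b < a)%N) (if t b then -1 else 1).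

Lemma jw_sign_sqr a t : jw_sign a t * jw_sign a t = 1.
Proof. by rewrite -big_split big1 // => b _ /=; case: (t b); rewrite ?mulrNN mulr1. Qed.

Lemma jw_sign_neq0 a t : jw_sign a t != 0.
Proof. by apply: contra_eq_neq (jw_sign_sqr a t) => ->; rewrite mul0r eq_sym oner_neq0. Qed.

Lemma jw_signDebit a b t :
  jw_sign a (ebit b + t) = (if (b < a)%N then -1 else 1) * jw_sign a t.
Proof.
have flip_other c : c != b -> (ebit b + t) c = t c by rewrite bitsDE ebitE => /negbTE ->.
case: ifP => [lt_ba | ge_ba].
  rewrite /jw_sign (bigD1 b) //= [in RHS](bigD1 b) //= bitsDE ebitE eqxx mulrA.
  congr (_ * _); first by case: (t b); rewrite ?mulrN1 ?mulr1 ?opprK.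
  by apply: eq_bigr => c /andP [_ /flip_other ->].
rewrite mul1r; apply: eq_bigr => c lt_ca; rewrite flip_other //.
by apply: contraFN ge_ba => /eqP <-.
Qed.

Lemma jw_sign_anti a b t : a != b ->
  jw_sign a (ebit b + t) * jw_sign b t + jw_sign b (ebit a + t) * jw_sign a t = 0.
Proof.
move=> neq_ab; rewrite !jw_signDebit.
by case: ltngtP => [_|_|/val_inj eq_ab]; [ring|ring|rewrite eq_ab eqxx in neq_ab].
Qed.

Definition jw_mx a (c : bool -> F) : 'M[F]_#|bits n|.-1.+1 :=
  monomx (ebit a) (fun t => c (t a) * jw_sign a t).

Lemma jw_mxD a c d : jw_mx a c + jw_mx a d = jw_mx a (fun x => c x + d x).
Proof. by rewrite /jw_mx monomxD; apply: eq_monomx => t; rewrite mulrDl. Qed.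

Lemma jw_mxMM a c d : jw_mx a c * jw_mx a d = monomx 0 (fun t => c (~~ t a) * d (t a)).
Proof.
rewrite /jw_mx monomxM bits_addNN; apply: eq_monomx => t.
rewrite jw_signDebit ltnn mul1r bitsDE ebitE eqxx /=.
by rewrite mulrACA jw_sign_sqr mulr1.
Qed.

Lemma jw_mx_anti a b c d : a != b ->
  jw_mx a c * jw_mx b d + jw_mx b d * jw_mx a c = 0.
Proof.
move=> neq_ab; rewrite /jw_mx !monomxM [ebit b + _]addrC monomxD; apply: monomx0 => t.
rewrite !bitsDE !ebitE (negbTE neq_ab) eq_sym (negbTE neq_ab) /=.
transitivity (c (t a) * d (t b) *
  (jw_sign a (ebit b + t) * jw_sign b t + jw_sign b (ebit a + t) * jw_sign a t)).
  by ring.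
by rewrite jw_sign_anti // mulr0.
Qed.

End JordanWigner.

Section CliffordRepresentation.
Variables (F : fieldType) (n k : nat) (q : F) (w : 'I_n -> F).
Hypotheses (q_neq0 : q != 0) (w_neq0 : forall a, w a != 0)
  (w_order : forall a, w a ^+ (2 * k) = 1).
Implicit Types (a b : 'I_n) (t : bits n).

Definition rep_psi a := jw_mx a (fun x => if x then w a ^+ k else 0).
Definition rep_psis a := jw_mx a (fun x => if x then 0 else 1 : F).
Definition rep_om a := monomx 0 (fun t => if t a then w a / q else w a).
Definition rep_omi a := monomx 0 (fun t => if t a then q / w a else (w a)^-1).

Lemma wkK a : w a ^+ k * w a ^+ k = 1.
Proof. by rewrite -exprD addnn -mul2n w_order. Qed.

Lemma wkV a : (w a ^+ k)^-1 = w a ^+ k.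
Proof. by rewrite -[LHS]mulr1 -(wkK a) mulKf // expf_neq0. Qed.

Lemma rep_psi_psis a :
  rep_psi a * rep_psis a = monomx 0 (fun t => if t a then 0 else w a ^+ k).
Proof.
rewrite /rep_psi /rep_psis jw_mxMM; apply: eq_monomx => t.
by case: (t a); rewrite /= ?mulr1 ?mulr0.
Qed.

Lemma rep_psis_psi a :
  rep_psis a * rep_psi a = monomx 0 (fun t => if t a then w a ^+ k else 0).
Proof.
rewrite /rep_psi /rep_psis jw_mxMM; apply: eq_monomx => t.
by case: (t a); rewrite /= ?mul1r ?mul0r.
Qed.

Lemma rep_omC a b : rep_om a * rep_om b = rep_om b * rep_om a.
Proof. by rewrite !monomxM; apply: eq_monomx => t; rewrite add0r mulrC. Qed.

Lemma rep_omK a : rep_om a * rep_omi a = 1 /\ rep_omi a * rep_om a = 1.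
Proof.
by rewrite !monomxM addr0 -monomx1; split; apply: eq_monomx => t;
  rewrite add0r; case: (t a); field; rewrite ?w_neq0 ?q_neq0.
Qed.

Lemma rep_om_psi a b :
  rep_om a * rep_psi b = (if a == b then q else 1) *: (rep_psi b * rep_om a).
Proof.
rewrite !monomxM monomxZ add0r addr0; apply: eq_monomx => t.
rewrite add0r bitsDE ebitE; have [<- | _] := eqVneq a b; last by rewrite mul1r mulrC.
by case: (t a) => /=; [field|ring].
Qed.

Lemma rep_om_psis a b :
  rep_om a * rep_psis b = (if a == b then q^-1 else 1) *: (rep_psis b * rep_om a).
Proof.
rewrite !monomxM monomxZ add0r addr0; apply: eq_monomx => t.
rewrite add0r bitsDE ebitE; have [<- | _] := eqVneq a b; last by rewrite mul1r mulrC.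
by case: (t a) => /=; [ring|field].
Qed.

Lemma rep_psi_anti a b : rep_psi a * rep_psi b + rep_psi b * rep_psi a = 0.
Proof.
have [<- | ] := eqVneq a b; last exact: jw_mx_anti.
by rewrite jw_mxMM monomx0 ?addr0 // => t; case: (t a); rewrite ?mulr0 ?mul0r.
Qed.

Lemma rep_psis_anti a b : rep_psis a * rep_psis b + rep_psis b * rep_psis a = 0.
Proof.
have [<- | ] := eqVneq a b; last exact: jw_mx_anti.
by rewrite jw_mxMM monomx0 ?addr0 // => t; case: (t a); rewrite ?mulr0 ?mul0r.
Qed.

Lemma rep_psi_psisX a :
  rep_psi a * rep_psis a + q ^+ k *: (rep_psis a * rep_psi a) = rep_omi a ^+ k.
Proof.
rewrite rep_psi_psis rep_psis_psi monomxZ monomxD diag_monomxX.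
apply: eq_monomx => t; case: (t a); rewrite ?mulr0 ?add0r ?addr0 //.
  by rewrite expr_div_n wkV.
by rewrite exprVn wkV.
Qed.

Lemma rep_psi_psisXV a :
  rep_psi a * rep_psis a + (q ^+ k)^-1 *: (rep_psis a * rep_psi a) = rep_om a ^+ k.
Proof.
rewrite rep_psi_psis rep_psis_psi monomxZ monomxD diag_monomxX.
apply: eq_monomx => t; case: (t a); rewrite ?mulr0 ?add0r ?addr0 //.
by rewrite expr_div_n mulrC.
Qed.

Lemma rep_clq_rels : clq_rels q k rep_psi rep_psis rep_om rep_omi.
Proof.
split; [exact: rep_omC|split; [exact: rep_omK|split; [exact: rep_om_psi|]]].
split; [exact: rep_om_psis|split; [exact: rep_psi_anti|split; [exact: rep_psis_anti|]]].
split; [exact: rep_psi_psisX|split; [exact: rep_psi_psisXV|]].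
by move=> a b; apply: jw_mx_anti.
Qed.

Lemma rep_idem0 a : rep_psi a * rep_psis a * (rep_psi a * rep_psis a) =
  monomx 0 (fun t => if t a then 0 else 1).
Proof.
rewrite rep_psi_psis monomxM addr0; apply: eq_monomx => t.
by rewrite add0r; case: (t a); rewrite ?mulr0 ?wkK.
Qed.

Lemma rep_idem1 a : rep_psis a * rep_psi a * (rep_psis a * rep_psi a) =
  monomx 0 (fun t => if t a then 1 else 0).
Proof.
rewrite rep_psis_psi monomxM addr0; apply: eq_monomx => t.
by rewrite add0r; case: (t a); rewrite ?mulr0 ?wkK.
Qed.

Lemma rep_central a :
  rep_psi a * rep_psis a * (rep_psi a * rep_psis a) * rep_om a
  + q *: (rep_psis a * rep_psi a * (rep_psis a * rep_psi a) * rep_om a) = (w a)%:M.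
Proof.
rewrite rep_idem0 rep_idem1 !monomxM addr0 monomxZ monomxD -monomx_scalar.
apply: eq_monomx => t; rewrite add0r.
by case: (t a); rewrite ?mul0r ?mul1r ?add0r ?addr0 //; field.
Qed.

Lemma rep_psiD_psis a :
  rep_psi a + rep_psis a = jw_mx a (fun x => if x then w a ^+ k else 1).
Proof.
rewrite /rep_psi /rep_psis jw_mxD; apply: eq_monomx => t.
by case: (t a); rewrite ?addr0 ?add0r.
Qed.

End CliffordRepresentation.

Section ClqInduction.
Variables (F : fieldType) (A : algType F) (L : A -> Prop).
Hypotheses (L1 : L 1) (LD : forall x y, L x -> L y -> L (x + y))
  (LZ : forall (c : F) x, L x -> L (c *: x)) (LM : forall x y, L x -> L y -> L (x * y)).

Definition subalg_pred (x : A) : bool := classicb (L x).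

Lemma subalg_pred_closed : GRing.subsemialg_closed subalg_pred.
Proof.
split; first exact/classicbP.
- split; first by apply/classicbP; rewrite -(scale0r 1); apply: LZ.
  by move=> x y /classicbP Lx /classicbP Ly; apply/classicbP; apply: LD.
- by move=> c x /classicbP Lx; apply/classicbP; apply: LZ.
- by move=> x y /classicbP Lx /classicbP Ly; apply/classicbP; apply: LM.
Qed.

HB.instance Definition _ := GRing.isSubalgClosed.Build F A subalg_pred subalg_pred_closed.
Record subalg := Subalg { subalg_val : A; _ : subalg_pred subalg_val }.
HB.instance Definition _ := [isSub for subalg_val].
HB.instance Definition _ := [Choice of subalg by <:].
HB.instance Definition _ := [SubChoice_isSubAlgebra of subalg by <:].

Variables (q : F) (n k : nat) (psi psis om omi : 'I_n -> A).
Hypothesis A_Clq : is_Clq q k psi psis om omi.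
Hypotheses (Lpsi : forall a, L (psi a)) (Lpsis : forall a, L (psis a))
  (Lom : forall a, L (om a)) (Lomi : forall a, L (omi a)).

Let in_subalg (x : A) (Lx : L x) : subalg := Subalg (introT (classicbP _) Lx).

Lemma subalg_clq_rels : clq_rels q k (fun a => in_subalg (Lpsi a))
  (fun a => in_subalg (Lpsis a)) (fun a => in_subalg (Lom a)) (fun a => in_subalg (Lomi a)).
Proof.
have valX (y : subalg) m : subalg_val (y ^+ m) = subalg_val y ^+ m.
  by elim: m => [|m IH]; rewrite ?expr0 // !exprS -IH.
case: A_Clq => [[r1 [r2 [r3 [r4 [r5 [r6 [r7 [r8 r9]]]]]]]] _].
split; [|split; [|split; [|split; [|split; [|split; [|split; [|split]]]]]]].
- by move=> a b; apply: val_inj => /=; rewrite r1.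
- by move=> a; have [ra ra'] := r2 a; split; apply: val_inj.
- by move=> a b; apply: val_inj => /=; rewrite r3.
- by move=> a b; apply: val_inj => /=; rewrite r4.
- by move=> a b; apply: val_inj => /=; rewrite r5.
- by move=> a b; apply: val_inj => /=; rewrite r6.
- by move=> a; apply: val_inj => /=; rewrite valX r7.
- by move=> a; apply: val_inj => /=; rewrite valX r8.
- by move=> a b neq_ab; apply: val_inj => /=; rewrite r9.
Qed.

Lemma clq_ind x : L x.
Proof.
have [_ uniq] := A_Clq; have [[g [[gD gZ gM g1] g_gen]] _] := uniq _ _ _ _ _ subalg_clq_rels.
have -> : x = subalg_val (g x).
  apply: ((uniq _ _ _ _ _ A_Clq.1).2 id (fun y => subalg_val (g y))) => //.
    by split=> [y z|c y|y z|]; rewrite ?gD ?gZ ?gM ?g1.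
  by move=> a; have [-> -> -> ->] := g_gen a.
by apply/classicbP; case: (g x).
Qed.

End ClqInduction.

Section CliffordAlgebra.
Variables (F : fieldType) (q : F) (n k : nat) (A : algType F).
Variables (psi psis om omi : 'I_n -> A).
Hypotheses (rels : clq_rels q k psi psis om omi) (two_neq0 : 2%:R != 0 :> F).
Hypotheses (q_neq0 : q != 0) (k_gt0 : (0 < k)%N).
Implicit Types a b : 'I_n.

Lemma clq_omC a b : om a * om b = om b * om a. Proof. by case: rels. Qed.
Lemma clq_omK a : om a * omi a = 1. Proof. by case: rels => _ [/(_ a) []]. Qed.
Lemma clq_omiK a : omi a * om a = 1. Proof. by case: rels => _ [/(_ a) []]. Qed.
Lemma clq_om_psi a b : om a * psi b = (if a == b then q else 1) *: (psi b * om a).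
Proof. by case: rels => _ [_ [->]]. Qed.
Lemma clq_om_psis a b : om a * psis b = (if a == b then q^-1 else 1) *: (psis b * om a).
Proof. by case: rels => _ [_ [_ [->]]]. Qed.
Lemma clq_psi_anti a b : psi a * psi b + psi b * psi a = 0.
Proof. by case: rels => _ [_ [_ [_ [->]]]]. Qed.
Lemma clq_psis_anti a b : psis a * psis b + psis b * psis a = 0.
Proof. by case: rels => _ [_ [_ [_ [_ [->]]]]]. Qed.
Lemma clq_omiX a : psi a * psis a + q ^+ k *: (psis a * psi a) = omi a ^+ k.
Proof. by case: rels => _ [_ [_ [_ [_ [_ [->]]]]]]. Qed.
Lemma clq_omX a : psi a * psis a + (q ^+ k)^-1 *: (psis a * psi a) = om a ^+ k.
Proof. by case: rels => _ [_ [_ [_ [_ [_ [_ [->]]]]]]]. Qed.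
Lemma clq_psi_psis_anti a b : a != b -> psi a * psis b + psis b * psi a = 0.
Proof. by move=> neq_ab; case: rels => _ [_ [_ [_ [_ [_ [_ [_ /(_ a b neq_ab)]]]]]]]. Qed.

Lemma double_eq0 (x : A) : x + x = 0 -> x = 0.
Proof.
move=> xx0; have /eqP : 2%:R *: x = 0 :> A by rewrite scaler_nat mulr2n.
by rewrite scaler_eq0 (negbTE two_neq0) => /eqP.
Qed.

Lemma clq_psi_sqr a : psi a * psi a = 0.
Proof. exact/double_eq0/clq_psi_anti. Qed.
Lemma clq_psis_sqr a : psis a * psis a = 0.
Proof. exact/double_eq0/clq_psis_anti. Qed.

Definition idem0 a := psi a * psis a * (psi a * psis a).
Definition idem1 a := psis a * psi a * (psis a * psi a).

Lemma psi_psis_psis_psi a : psi a * psis a * (psis a * psi a) = 0.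
Proof. by rewrite mulrA -(mulrA (psi a)) clq_psis_sqr mulr0 mul0r. Qed.
Lemma psis_psi_psi_psis a : psis a * psi a * (psi a * psis a) = 0.
Proof. by rewrite mulrA -(mulrA (psis a)) clq_psi_sqr mulr0 mul0r. Qed.

Lemma omX_psi_psis a : om a ^+ k * (psi a * psis a) = idem0 a.
Proof. by rewrite -clq_omX mulrDl -scalerAl psis_psi_psi_psis scaler0 addr0. Qed.
Lemma omiX_psi_psis a : omi a ^+ k * (psi a * psis a) = idem0 a.
Proof. by rewrite -clq_omiX mulrDl -scalerAl psis_psi_psi_psis scaler0 addr0. Qed.
Lemma omX_psis_psi a : om a ^+ k * (psis a * psi a) = (q ^+ k)^-1 *: idem1 a.
Proof. by rewrite -clq_omX mulrDl -scalerAl psi_psis_psis_psi add0r. Qed.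
Lemma omiX_psis_psi a : omi a ^+ k * (psis a * psi a) = q ^+ k *: idem1 a.
Proof. by rewrite -clq_omiX mulrDl -scalerAl psi_psis_psis_psi add0r. Qed.

Lemma omX_omiX a : om a ^+ k * omi a ^+ k = 1.
Proof.
rewrite -exprMn_comm ?clq_omK ?expr1n //.
by rewrite /GRing.comm clq_omK clq_omiK.
Qed.

Lemma psi_psis_idem0 a : psi a * psis a = om a ^+ k * idem0 a.
Proof. by rewrite -omiX_psi_psis (mulrA (om a ^+ k)) omX_omiX mul1r. Qed.
Lemma psis_psi_idem1 a : psis a * psi a = q ^+ k *: (om a ^+ k * idem1 a).
Proof. by rewrite scalerAr -omiX_psis_psi (mulrA (om a ^+ k)) omX_omiX mul1r. Qed.

Lemma idem0D1 a : idem0 a + idem1 a = 1.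
Proof.
rewrite -(omX_omiX a) -clq_omiX mulrDr omX_psi_psis -scalerAr omX_psis_psi.
by rewrite scalerA mulfV ?scale1r // expf_neq0.
Qed.

Lemma psi_idem0 a : psi a * idem0 a = 0.
Proof. by rewrite /idem0 !mulrA clq_psi_sqr !mul0r. Qed.
Lemma psis_idem1 a : psis a * idem1 a = 0.
Proof. by rewrite /idem1 !mulrA clq_psis_sqr !mul0r. Qed.
Lemma psi_idem1 a : psi a * idem1 a = psi a.
Proof. by rewrite -{2}[psi a]mulr1 -(idem0D1 a) mulrDr psi_idem0 add0r. Qed.
Lemma psis_idem0 a : psis a * idem0 a = psis a.
Proof. by rewrite -{2}[psis a]mulr1 -(idem0D1 a) mulrDr psis_idem1 addr0. Qed.

Lemma skew_comm_om_psi a : skew_comm (om a) (psi a) q.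
Proof. by rewrite /skew_comm clq_om_psi eqxx. Qed.
Lemma skew_comm_om_psis a : skew_comm (om a) (psis a) q^-1.
Proof. by rewrite /skew_comm clq_om_psis eqxx. Qed.

Lemma comm_om_psi_psis a : GRing.comm (om a) (psi a * psis a).
Proof.
have := skew_commM (skew_comm_om_psi a) (skew_comm_om_psis a).
by rewrite /skew_comm mulfV // scale1r.
Qed.
Lemma comm_om_psis_psi a : GRing.comm (om a) (psis a * psi a).
Proof.
have := skew_commM (skew_comm_om_psis a) (skew_comm_om_psi a).
by rewrite /skew_comm mulVf // scale1r.
Qed.

Lemma comm_omX_idem0 a j : GRing.comm (om a ^+ j) (idem0 a).
Proof. by apply/commr_sym/commrX/commr_sym/commrM; apply: comm_om_psi_psis. Qed.
Lemma comm_omX_idem1 a j : GRing.comm (om a ^+ j) (idem1 a).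
Proof. by apply/commr_sym/commrX/commr_sym/commrM; apply: comm_om_psis_psi. Qed.

Lemma idem0_om2k a : idem0 a * om a ^+ (2 * k) = idem0 a.
Proof.
by rewrite -comm_omX_idem0 mul2n -addnn exprD -mulrA -psi_psis_idem0 omX_psi_psis.
Qed.
Lemma idem1_om2k a : idem1 a * om a ^+ (2 * k) = (q ^+ k)^-2 *: idem1 a.
Proof.
have omX_idem1 : om a ^+ k * idem1 a = (q ^+ k)^-1 *: (psis a * psi a).
  by rewrite psis_psi_idem1 scalerA mulVf ?scale1r // expf_neq0.
rewrite -comm_omX_idem1 mul2n -addnn exprD -mulrA omX_idem1 -scalerAr omX_psis_psi.
by rewrite scalerA -expr2 exprVn.
Qed.

(* The four elements [E_ij] of the copy of [Mat_2] attached to the mode [a]. *)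
Definition eunit a (p : bool * bool) : A :=
  match p with
  | (false, false) => idem0 a | (false, true) => psi a
  | (true, false) => psis a | (true, true) => idem1 a
  end.

Definition eunit_twist (p : bool * bool) : F :=
  match p with (false, true) => q | (true, false) => q^-1 | _ => 1 end.

Lemma eunit_twist_neq0 p : eunit_twist p != 0.
Proof. by case: p => [[] []]; rewrite /= ?oner_neq0 ?invr_eq0. Qed.

Lemma skew_comm_om_eunit a p : skew_comm (om a) (eunit a p) (eunit_twist p).
Proof.
case: p => [[] []]; [| exact: skew_comm_om_psis | exact: skew_comm_om_psi |];
  rewrite /skew_comm scale1r; [exact: (comm_omX_idem1 a 1)|exact: (comm_omX_idem0 a 1)].
Qed.

Lemma eunit_om2k a p :
  eunit a p * om a ^+ (2 * k) = (if p.2 then (q ^+ k)^-2 else 1) *: eunit a p.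
Proof.
case: p => [[] []] /=; rewrite ?idem1_om2k ?idem0_om2k ?scale1r //.
  by rewrite -psis_idem0 -mulrA idem0_om2k.
by rewrite -psi_idem1 -mulrA idem1_om2k -scalerAr.
Qed.

Lemma eunit_omi a p : eunit a p * omi a =
  (if p.2 then (q ^+ k)^-2 else 1)^-1 *: (eunit a p * om a ^+ (2 * k).-1).
Proof.
have scale_neq0 : (if p.2 then (q ^+ k)^-2 else 1) != 0.
  by case: p.2; rewrite ?oner_neq0 // invr_eq0 !expf_neq0.
rewrite -[eunit a p * om a ^+ _]mulr1 -(clq_omK a) mulrA -(mulrA (eunit a p)) -exprSr.
by rewrite prednK ?muln_gt0 // eunit_om2k -scalerAl scalerA mulVf ?scale1r.
Qed.

Definition mode_monomial a (m : (bool * bool) * 'I_(2 * k)) := eunit a m.1 * om a ^+ m.2.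

Local Notation mode_span a := (in_span (mode_monomial a)).

Lemma mode_span_eunit_omX a p j : mode_span a (eunit a p * om a ^+ j).
Proof.
elim/ltn_ind: j => j IH; case: (ltnP j (2 * k)) => [lt_j | ge_j].
  exact: (in_span_gen _ (p, Ordinal lt_j)).
rewrite -(subnKC ge_j) exprD mulrA eunit_om2k -scalerAl; apply/in_spanZ/IH.
by rewrite -subn_gt0 subnBA // addnC addnK muln_gt0.
Qed.

Lemma mode_span_psi a m : mode_span a (psi a * mode_monomial a m).
Proof.
case: m => [[[] []] j]; rewrite /mode_monomial /= mulrA.
- by rewrite psi_idem1; apply: (mode_span_eunit_omX a (false, true)).
- rewrite psi_psis_idem0 comm_omX_idem0 -mulrA -exprD.
  exact: (mode_span_eunit_omX a (false, false)).
- by rewrite clq_psi_sqr mul0r; apply: in_span0.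
- by rewrite psi_idem0 mul0r; apply: in_span0.
Qed.

Lemma mode_span_psis a m : mode_span a (psis a * mode_monomial a m).
Proof.
case: m => [[[] []] j]; rewrite /mode_monomial /= mulrA.
- by rewrite psis_idem1 mul0r; apply: in_span0.
- by rewrite clq_psis_sqr mul0r; apply: in_span0.
- rewrite psis_psi_idem1 -scalerAl comm_omX_idem1 -mulrA -exprD.
  exact/in_spanZ/(mode_span_eunit_omX a (true, true)).
- by rewrite psis_idem0; apply: (mode_span_eunit_omX a (true, false)).
Qed.

Lemma mode_span_om a m : mode_span a (om a * mode_monomial a m).
Proof.
case: m => p j; rewrite /mode_monomial /= mulrA skew_comm_om_eunit -scalerAl.
by rewrite -mulrA -exprS; apply/in_spanZ/mode_span_eunit_omX.
Qed.

Lemma mode_span_omi a m : mode_span a (omi a * mode_monomial a m).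
Proof.
case: m => p j; rewrite /mode_monomial /= mulrA.
have := skew_commV (clq_omK a) (clq_omiK a) (eunit_twist_neq0 p) (skew_comm_om_eunit a p).
rewrite /skew_comm => ->; rewrite -scalerAl eunit_omi -scalerAl -mulrA -exprD.
by apply/in_spanZ/in_spanZ/mode_span_eunit_omX.
Qed.

Lemma skew_comm_mode_monomial g a s1 s2 s3 :
    skew_comm g (psi a) s1 -> skew_comm g (psis a) s2 -> skew_comm g (om a) s3 ->
  forall m, exists s, skew_comm g (mode_monomial a m) s.
Proof.
move=> g_psi g_psis g_om [p j]; rewrite /mode_monomial /=.
have g_psi_psis : skew_comm g (psi a * psis a) (s1 * s2) by apply: skew_commM.
have g_psis_psi : skew_comm g (psis a * psi a) (s2 * s1) by apply: skew_commM.
suff [s g_eunit] : exists s, skew_comm g (eunit a p) s.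
  by exists (s * s3 ^+ j); apply/skew_commM/skew_commX.
case: p => [[] []] /=; eexists.
- exact: (skew_commM g_psis_psi g_psis_psi).
- exact: g_psis.
- exact: g_psi.
- exact: (skew_commM g_psi_psis g_psi_psis).
Qed.

Lemma skew_comm_psi_mode b a : a != b ->
  forall m, exists s, skew_comm (psi b) (mode_monomial a m) s.
Proof.
move=> neq_ab; apply: (skew_comm_mode_monomial (s1 := -1) (s2 := -1) (s3 := 1)).
- exact/skew_comm_anti/clq_psi_anti.
- by apply/skew_comm_anti/clq_psi_psis_anti; rewrite eq_sym.
- by rewrite /skew_comm clq_om_psi (negbTE neq_ab) !scale1r.
Qed.

Lemma skew_comm_psis_mode b a : a != b ->
  forall m, exists s, skew_comm (psis b) (mode_monomial a m) s.
Proof.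
move=> neq_ab; apply: (skew_comm_mode_monomial (s1 := -1) (s2 := -1) (s3 := 1)).
- by apply/skew_comm_anti; rewrite addrC clq_psi_psis_anti.
- exact/skew_comm_anti/clq_psis_anti.
- by rewrite /skew_comm clq_om_psis (negbTE neq_ab) !scale1r.
Qed.

Lemma skew_comm_om_other b a : a != b ->
  [/\ skew_comm (om b) (psi a) 1, skew_comm (om b) (psis a) 1 & skew_comm (om b) (om a) 1].
Proof.
move=> neq_ab; rewrite /skew_comm clq_om_psi clq_om_psis clq_omC eq_sym (negbTE neq_ab).
by rewrite !scale1r.
Qed.

Lemma skew_comm_om_mode b a : a != b ->
  forall m, exists s, skew_comm (om b) (mode_monomial a m) s.
Proof. by case/skew_comm_om_other; apply: skew_comm_mode_monomial. Qed.

Lemma skew_comm_omi_mode b a : a != b ->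
  forall m, exists s, skew_comm (omi b) (mode_monomial a m) s.
Proof.
have inv := skew_commV (clq_omK b) (clq_omiK b) (oner_neq0 F).
by case/skew_comm_om_other => *; apply: skew_comm_mode_monomial; apply: inv.
Qed.

Definition clq_monomial (t : {ffun 'I_n -> (bool * bool) * 'I_(2 * k)}) : A :=
  \prod_(a < n) mode_monomial a (t a).

Local Notation clq_span := (in_span clq_monomial).

Lemma clq_span_mull g b :
    (forall m, mode_span b (g * mode_monomial b m)) ->
    (forall a, a != b -> forall m, exists s, skew_comm g (mode_monomial a m) s) ->
  forall x, clq_span x -> clq_span (g * x).
Proof.
move=> g_mode g_other x [cf ->]; rewrite mulr_sumr; apply: in_span_sum => t _.
rewrite -scalerAr; apply: in_spanZ.
have [|s ->] := @skew_comm_prod _ _ _ _ b g (fun a => mode_monomial a (t a))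
  (index_enum_uniq _) (mem_index_enum b).
  by move=> a _ /g_other; apply.
apply/in_spanZ/prod_in_span => a; case: eqP => [-> | _]; first exact: g_mode.
exact: in_span_gen.
Qed.

Lemma clq_span1 : clq_span 1.
Proof.
have <- : \prod_(a < n) (1 : A) = 1 by rewrite big1.
apply: prod_in_span => a.
rewrite -(idem0D1 a); apply: in_spanD.
  by have := mode_span_eunit_omX a (false, false) 0; rewrite mulr1.
by have := mode_span_eunit_omX a (true, true) 0; rewrite mulr1.
Qed.

Lemma clq_spanning : is_Clq q k psi psis om omi -> forall x, clq_span x.
Proof.
move=> A_Clq x; suff : forall y, clq_span y -> clq_span (x * y).
  by move/(_ 1 clq_span1); rewrite mulr1.
apply: (clq_ind (L := fun x => forall y, clq_span y -> clq_span (x * y))) A_Clq _ _ _ _ x.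
- by move=> y; rewrite mul1r.
- move=> x1 x2 span1 span2 y y_span; rewrite mulrDl.
  by apply: in_spanD; [apply: span1|apply: span2].
- by move=> c x1 span1 y y_span; rewrite -scalerAl; apply/in_spanZ/span1.
- by move=> x1 x2 span1 span2 y y_span; rewrite -mulrA; apply/span1/span2.
- by move=> b; apply: (clq_span_mull (mode_span_psi b)) => a; apply: skew_comm_psi_mode.
- by move=> b; apply: (clq_span_mull (mode_span_psis b)) => a; apply: skew_comm_psis_mode.
- by move=> b; apply: (clq_span_mull (mode_span_om b)) => a; apply: skew_comm_om_mode.
- by move=> b; apply: (clq_span_mull (mode_span_omi b)) => a; apply: skew_comm_omi_mode.
Qed.

End CliffordAlgebra.

Section CliffordBlocks.
Variables (F : fieldType) (q : F) (n k : nat) (A : algType F).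
Variables (psi psis om omi : 'I_n -> A).
Hypotheses (A_Clq : is_Clq q k psi psis om omi) (two_neq0 : 2%:R != 0 :> F).
Hypotheses (q_neq0 : q != 0) (k_gt0 : (0 < k)%N).
Variables (z : F) (z_prim : (2 * k).-primitive_root z).
Implicit Types (a : 'I_n) (s t : bits n).

Local Notation D := #|bits n|.-1.+1.
Local Notation block := {ffun 'I_n -> 'I_(2 * k)}.

Definition block_weight (c : block) a : F := z ^+ c a.

Lemma block_weight_order c a : block_weight c a ^+ (2 * k) = 1.
Proof. by rewrite /block_weight exprAC (prim_expr_order z_prim) expr1n. Qed.

Lemma block_weight_neq0 c a : block_weight c a != 0.
Proof.
apply: contra_eq_neq (block_weight_order c a) => ->.
by rewrite expr0n muln_eq0 /= eqn0Ngt k_gt0 eq_sym oner_neq0.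
Qed.

Lemma block_rep (c : block) :
  exists g : A -> 'M[F]_D, is_alg_hom g /\
    forall a, [/\ g (psi a) = rep_psi k (block_weight c) a, g (psis a) = rep_psis F a
                & g (om a) = rep_om q (block_weight c) a].
Proof.
have [_ univ] := A_Clq; have [[g [g_hom g_gen]] _] := univ _ _ _ _ _
  (rep_clq_rels q_neq0 (block_weight_neq0 c) (block_weight_order c)).
by exists g; split=> // a; have [-> -> -> _] := g_gen a.
Qed.

Variable f : block -> A -> 'M[F]_D.
Hypothesis f_hom : forall c, is_alg_hom (f c).
Hypothesis f_gen : forall c a, [/\ f c (psi a) = rep_psi k (block_weight c) a,
  f c (psis a) = rep_psis F a & f c (om a) = rep_om q (block_weight c) a].

Lemma f_idem0 c a : f c (idem0 psi psis a) = monomx 0 (fun t => if t a then 0 else 1).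
Proof.
have [psiE psisE _] := f_gen c a.
by rewrite !(alg_homM (f_hom c)) psiE psisE (rep_idem0 (block_weight_order c)).
Qed.

Lemma f_idem1 c a : f c (idem1 psi psis a) = monomx 0 (fun t => if t a then 1 else 0).
Proof.
have [psiE psisE _] := f_gen c a.
by rewrite !(alg_homM (f_hom c)) psiE psisE (rep_idem1 (block_weight_order c)).
Qed.

Definition mode_weight a := idem0 psi psis a * om a + q *: (idem1 psi psis a * om a).

Lemma f_mode_weight c a : f c (mode_weight a) = (block_weight c a)%:M.
Proof.
have [psiE psisE omE] := f_gen c a; have [fD fZ fM _] := f_hom c.
rewrite fD fZ !fM omE psiE psisE.
exact: (rep_central q_neq0 (block_weight_order c)).
Qed.

(* Lagrange interpolation at the [2k] distinct roots of unity [z ^+ l]. *)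
Definition weight_proj a (j : 'I_(2 * k)) :=
  \prod_(l < 2 * k | l != j) ((z ^+ j - z ^+ l)^-1 *: (mode_weight a - z ^+ l *: 1)).

Lemma f_weight_proj c a j : f c (weight_proj a j) = ((c a == j)%:R)%:M.
Proof.
have [fD fZ _ f1] := f_hom c.
rewrite (alg_hom_prod (f_hom c)) (eq_bigr (fun l : 'I_(2 * k) => ((z ^+ j - z ^+ l)^-1 *
  (block_weight c a - z ^+ l))%:M)) => [|l _]; last first.
  rewrite fZ (alg_homB (f_hom c)) fZ f1 f_mode_weight; apply/matrixP => i i'.
  by rewrite !mxE; case: (i == i'); rewrite /= ?mulr1n ?mulr0n; ring.
transitivity ((\prod_(l < 2 * k | l != j)
  ((z ^+ j - z ^+ l)^-1 * (block_weight c a - z ^+ l)))%:M : 'M_D).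
  by rewrite rmorph_prod.
congr (_%:M); have [<- | neq_j] := eqVneq (c a) j.
  rewrite big1 // => l neq_l; rewrite mulVf // subr_eq0.
  by rewrite (eq_prim_root_expr z_prim) !modn_small // eq_sym.
by rewrite (bigD1 (c a)) //= /block_weight subrr mulr0 mul0r.
Qed.

Definition block_proj (c0 : block) := \prod_a weight_proj a (c0 a).

Lemma f_block_proj (c c0 : block) : f c (block_proj c0) = ((c == c0)%:R)%:M.
Proof.
rewrite (alg_hom_prod (f_hom c)) (eq_bigr _ (fun a _ => f_weight_proj c a (c0 a))).
by rewrite -rmorph_prod prod_eq_ffun.
Qed.

Definition bits_proj s := \prod_a (if s a then idem1 psi psis a else idem0 psi psis a).

Lemma f_bits_proj c s : f c (bits_proj s) = monomx 0 (fun t => (t == s)%:R).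
Proof.
rewrite (alg_hom_prod (f_hom c)) (eq_bigr (fun a => monomx 0 (fun t => (t a == s a)%:R))).
  by rewrite prod_diag_monomx; apply: eq_monomx => t; rewrite prod_eq_ffun.
by move=> a _; case: (s a); rewrite ?f_idem0 ?f_idem1; apply: eq_monomx => t; case: (t a).
Qed.

Definition bits_flip s t := \prod_a (if s a != t a then psi a + psis a else 1).

Lemma f_bits_flip c s t :
  exists2 g, (forall x, g x != 0) & f c (bits_flip s t) = monomx (s - t) g.
Proof.
pose gs a := if s a != t a
  then fun x : bits n => (if x a then block_weight c a ^+ k else 1) * jw_sign F a x
  else fun=> 1.
rewrite (alg_hom_prod (f_hom c)) (eq_bigr (fun a =>
  monomx (if s a != t a then ebit a else 0) (gs a))) => [|a _]; last first.
  rewrite /gs; case: ifP => _; last by rewrite (alg_hom1 (f_hom c)) monomx1.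
  by have [psiE psisE _] := f_gen c a; rewrite (alg_homD (f_hom c)) psiE psisE rep_psiD_psis.
rewrite -sum_ebit_diff; apply: prod_monomx => a x.
rewrite /gs; case: ifP => _; last exact: oner_neq0.
rewrite mulf_neq0 ?jw_sign_neq0 //; case: (x a); last exact: oner_neq0.
exact/expf_neq0/block_weight_neq0.
Qed.

Lemma clq_matrix_unit (c0 : block) (i j : 'I_D) :
  exists x, forall c, f c x = (c == c0)%:R *: delta_mx i j.
Proof.
pose s := elt_of_ord i; pose t := elt_of_ord j.
pose X := block_proj c0 * (bits_proj s * bits_flip s t * bits_proj t).
have fX c : exists2 g : bits n -> F, g t != 0 & f c X = (c == c0)%:R *: (g t *: delta_mx i j).
  have [g g_neq0 flipE] := f_bits_flip c s t; exists g => //.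
  rewrite !(alg_homM (f_hom c)) f_block_proj !f_bits_proj flipE monomx_corner !elt_of_ordK.
  by rewrite -scalemx1 -scalerAl mul1r.
have [g0 g0_neq0 fX0] := fX c0; exists ((g0 t)^-1 *: X) => c.
rewrite (alg_homZ (f_hom c)); have [-> | neq_c] := eqVneq c c0.
  by rewrite fX0 eqxx !scale1r scalerA mulVf ?scale1r.
by have [g _ ->] := fX c; rewrite (negbTE neq_c) !scale0r scaler0.
Qed.

Lemma clq_blocks_surj (M : block -> 'M[F]_D) : exists x, forall c, f c x = M c.
Proof. exact: joint_surj_of_units f_hom clq_matrix_unit M. Qed.

Lemma card_clq_monomials :
  #|{ffun 'I_n -> (bool * bool) * 'I_(2 * k)}| = (#|block| * (D * D))%N.
Proof.
rewrite prednK ?card_finZmod_gt0 // card_bits !card_ffun !card_prod !card_bool !card_ord.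
by rewrite -!expnMn mulnC.
Qed.

Lemma clq_blocks_inj x y : (forall c, f c x = f c y) -> x = y.
Proof.
have A_span := clq_spanning A_Clq.1 two_neq0 q_neq0 k_gt0 A_Clq.
exact: (joint_inj_of_span f_hom A_span card_clq_monomials clq_blocks_surj).
Qed.

End CliffordBlocks.

Theorem theorem4p5 (F : fieldType) (q : F) (n k : nat)
    (A : algType F) (psi psis om omi : 'I_n -> A) :
  ~~ (2%N \in [pchar F]) -> q != 0 -> (0 < n)%N -> (0 < k)%N ->
  is_Clq q k psi psis om omi ->
  (exists z : F, (2 * k)%N.-primitive_root z) ->
  semisimple_ring A /\
  iso_to_sum_of_matrix_algebras A ((2 * k) ^ n)%N (2 ^ n)%N.
Proof.
move=> not_char2 q_neq0 _ k_gt0 A_Clq [z z_prim].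
have two_neq0 : 2%:R != 0 :> F by apply: contra not_char2 => two_eq0; rewrite inE.
have [f f_spec] := fin_all_exists (block_rep A_Clq q_neq0 k_gt0 z_prim).
have f_hom c := (f_spec c).1; have f_gen c a := (f_spec c).2 a.
have f_inj := clq_blocks_inj A_Clq two_neq0 q_neq0 k_gt0 z_prim f_hom f_gen.
have f_surj := clq_blocks_surj q_neq0 k_gt0 z_prim f_hom f_gen.
split; first exact: semisimple_of_mx_product f_hom f_inj f_surj.
rewrite -card_bits -(prednK (card_finZmod_gt0 (bits n))).
have card_blocks : #|{ffun 'I_n -> 'I_(2 * k)}| = ((2 * k) ^ n)%N.
  by rewrite card_ffun !card_ord.
exact: (iso_of_joint_bij f_hom card_blocks f_inj f_surj).
Qed.
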